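(* For $A$ and $B$ as in the setting, the following decomposition formulae hold: \[ e^{A+B} = e^{dcl_{A}(B)}e^{A} + O(\| B \|^2), \qquad e^{A+B} = e^{A} e^{dcr_{A}(B)} + O(\| B \|^2). \] Additionally, if $A$ satisfies $e^{a_j - a_k} \neq 1$ for all $j \neq k$, the following composition formulae hold: \[ e^{B} e^{A} = e^{A + cml_{A}(B)} + O(\| B \|^2), \qquad e^{A} e^{B} = e^{A + cmr_{A}(B)} + O(\| B \|^2), \] where $\| \cdot \|$ denotes the Frobenius norm.
   Context: Let $A, B \in \mathbb{C}^{m \times m}$ be square complex matrices, with $B$ a (sufficiently small) perturbation. Suppose that $A$ is diagonalizable (not necessarily unitarily diagonalizable), and let $A=\sum_i a_i P_i$ be its spectral decomposition, where $a_i$ are the distinct eigenvalues ($a_i \neq a_j$ if $i\neq j$) and $P_i$ are projections satisfying $P_i P_j = \delta_{ij} P_i$ and $\sum_j P_j = I_m$. Define complex numbers $\ell_{jk}(A) := 1$ if $j=k$ and $\ell_{jk}(A) := (e^{a_j - a_k} -1)/(a_j - a_k)$ if $j\neq k$. For any $X \in \mathbb{C}^{m \times m}$ define the linear maps $dcl_{A}(X) := \sum_{j,k} \ell_{jk}(A) P_j X P_k$, $dcr_{A}(X) := \sum_{j,k} \ell_{kj}(A) P_j X P_k$, $cml_{A}(X) := \sum_{j,k} \frac{1}{\ell_{jk}(A)} P_j X P_k$, $cmr_{A}(X) := \sum_{j,k} \frac{1}{\ell_{kj}(A)} P_j X P_k$. *)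

From HB Require Import structures.
From mathcomp Require Import all_boot all_order all_algebra.
From mathcomp Require Import all_classical all_reals all_analysis.
From mathcomp Require Import complex.
Set Implicit Arguments. Unset Strict Implicit. Unset Printing Implicit Defensive.
Import Order.TTheory GRing.Theory Num.Theory.
Import numFieldNormedType.Exports.
Local Open Scope ring_scope.
Local Open Scope complex_scope.

Section Defs.
Variable R : realType.
Local Notation C := R[i].

Definition clim (u : nat -> C) : C :=
  (limn (fun n => complex.Re (u n))) +i* (limn (fun n => complex.Im (u n))).

Definition cexp (z : C) : C :=
  clim (fun N => \sum_(k < N) (k`!%:R)^-1 * z ^+ k).

Definition expm (m : nat) (M : 'M[C]_m) : 'M[C]_m :=
  \matrix_(i, j) clim (fun N => (\sum_(k < N) (k`!%:R)^-1 *: M ^+ k) i j).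

Definition frob (m n : nat) (B : 'M[C]_(m, n)) : R :=
  Num.sqrt (\sum_i \sum_j (complex.Re (B i j) ^+ 2 + complex.Im (B i j) ^+ 2)).

(* ell_{jk}(A) for A = sum_i a_i P_i *)
Definition ell (r : nat) (a : 'I_r -> C) (j k : 'I_r) : C :=
  if j == k then 1 else (cexp (a j - a k) - 1) / (a j - a k).

Definition dcl (r m : nat) (a : 'I_r -> C) (P : 'I_r -> 'M[C]_m) (X : 'M[C]_m) :=
  \sum_j \sum_k ell a j k *: (P j *m X *m P k).
Definition dcr (r m : nat) (a : 'I_r -> C) (P : 'I_r -> 'M[C]_m) (X : 'M[C]_m) :=
  \sum_j \sum_k ell a k j *: (P j *m X *m P k).
Definition cml (r m : nat) (a : 'I_r -> C) (P : 'I_r -> 'M[C]_m) (X : 'M[C]_m) :=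
  \sum_j \sum_k (ell a j k)^-1 *: (P j *m X *m P k).
Definition cmr (r m : nat) (a : 'I_r -> C) (P : 'I_r -> 'M[C]_m) (X : 'M[C]_m) :=
  \sum_j \sum_k (ell a k j)^-1 *: (P j *m X *m P k).

Definition bigO2 (m : nat) (F G : 'M[C]_m -> 'M[C]_m) : Prop :=
  exists K : R, exists2 d : R, 0 < d &
    forall B : 'M[C]_m, frob B < d -> frob (F B - G B) <= K * frob B ^+ 2.

End Defs.

(* Write Phi_jk := (e^(a_j) - e^(a_k)) / (a_j - a_k), with Phi_jj := e^(a_j).  Expanding
   (A + B)^k to first order in B inside the exponential series shows that the derivative of
   the exponential at A = sum_j a_j P_j is B |-> sum_jk Phi_jk P_j B P_k, so
   e^(A+B) = e^A + sum_jk Phi_jk P_j B P_k + O(|B|^2).  Since Phi_jk = ell_jk e^(a_k)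
   = e^(a_j) ell_kj, this first-order term is both dcl_A(B) e^A and e^A dcr_A(B), and
   e^X = 1 + X + O(|X|^2) turns it into the decomposition formulae.  When no e^(a_j - a_k)
   equals 1, every ell_jk is nonzero, so cml_A and cmr_A invert dcl_A and dcr_A, and
   substituting them into the decomposition formulae gives the composition formulae.
   All estimates use the entrywise l1 norm, which is submultiplicative and equivalent to the
   Frobenius norm. *)

From HB Require Import structures.
From mathcomp Require Import all_boot all_order all_algebra.
From mathcomp Require Import all_classical all_reals all_analysis.
From mathcomp Require Import complex.
From mathcomp Require Import ring lra zify.
Import Order.TTheory GRing.Theory Num.Theory.
Import numFieldNormedType.Exports.
Import Normc.
Set Implicit Arguments. Unset Strict Implicit. Unset Printing Implicit Defensive.
Local Open Scope ring_scope.
Local Open Scope classical_set_scope.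
Local Open Scope complex_scope.

Section L1Norm.
Variable R : rcfType.
Local Notation C := R[i].

Lemma normc_ge0 (z : C) : 0 <= normc z.
Proof. by case: z => a b; apply: sqrtr_ge0. Qed.

Lemma normc_ge_normRe (z : C) : `|complex.Re z| <= normc z.
Proof.
case: z => a b; rewrite /= -sqrtr_sqr ler_sqrt ?addr_ge0 ?sqr_ge0 //.
by rewrite lerDl sqr_ge0.
Qed.

Lemma normc_ge_normIm (z : C) : `|complex.Im z| <= normc z.
Proof.
case: z => a b; rewrite /= -sqrtr_sqr ler_sqrt ?addr_ge0 ?sqr_ge0 //.
by rewrite lerDr sqr_ge0.
Qed.

Lemma normc_le_normReIm (z : C) : normc z <= `|complex.Re z| + `|complex.Im z|.
Proof.
case: z => a b; rewrite /= -[X in _ <= X]ger0_norm ?addr_ge0 //.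
rewrite -[X in _ <= X]sqrtr_sqr ler_sqrt ?sqr_ge0 // sqrrD !real_normK ?num_real //.
by rewrite addrAC lerDl mulrn_wge0 // mulr_ge0.
Qed.

Lemma normc_nat n : normc (n%:R : C) = n%:R.
Proof.
by rewrite -(rmorph_nat (real_complex R)) /normc /= expr0n addr0 sqrtr_sqr ger0_norm.
Qed.

Lemma normc_sqr (z : C) : normc z ^+ 2 = complex.Re z ^+ 2 + complex.Im z ^+ 2.
Proof. by case: z => a b; rewrite /= sqr_sqrtr // addr_ge0 ?sqr_ge0. Qed.

Lemma ler_normc_sum (I : Type) (s : seq I) (P : pred I) (f : I -> C) :
  normc (\sum_(i <- s | P i) f i) <= \sum_(i <- s | P i) normc (f i).
Proof.
elim/big_rec2: _ => [|i y x _ IH]; first by rewrite normc0.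
exact: le_trans (le_normcD _ _) (lerD (lexx _) IH).
Qed.

Definition l1norm (m n : nat) (X : 'M[C]_(m, n)) : R := \sum_i \sum_j normc (X i j).

Section Rect.
Variables m n : nat.
Implicit Types X Y : 'M[C]_(m, n).

Lemma l1norm_ge0 X : 0 <= l1norm X.
Proof. by do 2![apply: sumr_ge0 => ? _]; apply: normc_ge0. Qed.

Lemma ler_l1normD X Y : l1norm (X + Y) <= l1norm X + l1norm Y.
Proof.
rewrite /l1norm -big_split ler_sum // => i _; rewrite -big_split ler_sum // => j _.
by rewrite mxE le_normcD.
Qed.

Lemma l1normN X : l1norm (- X) = l1norm X.
Proof. by apply: eq_bigr => i _; apply: eq_bigr => j _; rewrite mxE normcN. Qed.

Lemma l1normB X Y : l1norm (X - Y) = l1norm (Y - X).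
Proof. by rewrite -l1normN opprB. Qed.

Lemma l1normZ c X : l1norm (c *: X) = normc c * l1norm X.
Proof.
rewrite /l1norm mulr_sumr; apply: eq_bigr => i _; rewrite mulr_sumr.
by apply: eq_bigr => j _; rewrite mxE normcM.
Qed.

Lemma l1norm0 : l1norm (0 : 'M[C]_(m, n)) = 0.
Proof. by rewrite /l1norm big1 // => i _; rewrite big1 // => j _; rewrite mxE normc0. Qed.

Lemma ler_normc_l1norm X i j : normc (X i j) <= l1norm X.
Proof.
rewrite /l1norm (bigD1 i) //= (bigD1 j) //= -addrA lerDl addr_ge0 //.
  by apply: sumr_ge0 => k _; apply: normc_ge0.
by do 2![apply: sumr_ge0 => ? _]; apply: normc_ge0.
Qed.

Lemma ler_l1norm_sum (I : Type) (s : seq I) (P : pred I) (F : I -> 'M[C]_(m, n)) :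
  l1norm (\sum_(i <- s | P i) F i) <= \sum_(i <- s | P i) l1norm (F i).
Proof.
elim/big_rec2: _ => [|i y x _ IH]; first by rewrite l1norm0.
exact: le_trans (ler_l1normD _ _) (lerD (lexx _) IH).
Qed.

End Rect.

Lemma ler_l1normM (m n p : nat) (X : 'M[C]_(m, n)) (Y : 'M[C]_(n, p)) :
  l1norm (X *m Y) <= l1norm X * l1norm Y.
Proof.
rewrite /l1norm mulr_suml; apply: ler_sum => i _.
apply: (@le_trans _ _ (\sum_k \sum_j normc (X i j) * normc (Y j k))).
  apply: ler_sum => k _; rewrite mxE; apply: le_trans (ler_normc_sum _ _ _) _.
  by apply: ler_sum => j _; rewrite normcM.
rewrite exchange_big /= mulr_suml; apply: ler_sum => j _.
rewrite -mulr_sumr ler_wpM2l ?normc_ge0 //.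
by rewrite (bigD1 j) //= lerDl; do 2![apply: sumr_ge0 => ? _]; apply: normc_ge0.
Qed.

Lemma l1norm1 (m : nat) : l1norm (1%:M : 'M[C]_m) = m%:R.
Proof.
rewrite /l1norm (eq_bigr (fun _ => 1)) ?sumr_const ?card_ord // => i _.
rewrite (bigD1 i) //= big1 ?addr0 ?mxE ?eqxx ?normc_nat // => j /negbTE.
by rewrite mxE eq_sym => ->; rewrite normc_nat.
Qed.

Lemma ler_l1norm_exprMl (m : nat) (X Y : 'M[C]_m) k :
  l1norm (X ^+ k *m Y) <= l1norm X ^+ k * l1norm Y.
Proof.
elim: k => [|k IH]; first by rewrite expr0 mul1mx mul1r.
rewrite exprS -mulmxE -mulmxA; apply: le_trans (ler_l1normM _ _) _.
by rewrite exprS -mulrA ler_wpM2l ?l1norm_ge0.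
Qed.

Lemma ler_l1norm_expr (m : nat) (X : 'M[C]_m) k :
  l1norm (X ^+ k) <= m%:R * l1norm X ^+ k.
Proof. by have := ler_l1norm_exprMl X 1%:M k; rewrite mulmx1 l1norm1 mulrC. Qed.

End L1Norm.

Lemma sum_sqr_le_sqr_sum (R : numDomainType) (I : Type) (s : seq I) (f : I -> R) :
  (forall i, 0 <= f i) -> \sum_(i <- s) f i ^+ 2 <= (\sum_(i <- s) f i) ^+ 2.
Proof.
move=> f0; elim: s => [|x s IH]; first by rewrite !big_nil expr0n.
rewrite !big_cons sqrrD -addrA lerD2l; apply: le_trans IH _.
by rewrite lerDr mulrn_wge0 // mulr_ge0 // sumr_ge0.
Qed.

Section Frobenius.
Variable R : realType.
Variables m n : nat.
Implicit Type X : 'M[R[i]]_(m, n).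

Lemma frob_normc X : frob X = Num.sqrt (\sum_i \sum_j normc (X i j) ^+ 2).
Proof.
by congr Num.sqrt; apply: eq_bigr => i _; apply: eq_bigr => j _; rewrite normc_sqr.
Qed.

Lemma frob_le_l1norm X : frob X <= l1norm X.
Proof.
rewrite frob_normc -(ger0_norm (l1norm_ge0 X)) -sqrtr_sqr ler_sqrt ?sqr_ge0 //.
apply: le_trans (sum_sqr_le_sqr_sum _ _) => [|i]; last first.
  by apply: sumr_ge0 => j _; apply: normc_ge0.
by apply: ler_sum => i _; apply: sum_sqr_le_sqr_sum => j; apply: normc_ge0.
Qed.

Lemma normc_le_frob X i j : normc (X i j) <= frob X.
Proof.
rewrite frob_normc -(ger0_norm (normc_ge0 (X i j))) -sqrtr_sqr ler_sqrt; last first.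
  by do 2![apply: sumr_ge0 => ? _]; apply: sqr_ge0.
rewrite (bigD1 i) //= (bigD1 j) //= -addrA lerDl addr_ge0 //.
  by apply: sumr_ge0 => k _; apply: sqr_ge0.
by do 2![apply: sumr_ge0 => ? _]; apply: sqr_ge0.
Qed.

Lemma l1norm_le_frob X : l1norm X <= (m * n)%:R * frob X.
Proof.
apply: (@le_trans _ _ (\sum_(i < m) \sum_(j < n) frob X)).
  by apply: ler_sum => i _; apply: ler_sum => j _; apply: normc_le_frob.
by rewrite !sumr_const !card_ord -mulrnA mulr_natl mulnC.
Qed.

End Frobenius.

Section Convergence.
Variable R : realType.
Local Notation C := R[i].

Definition ccvg (u : nat -> C) (l : C) := normc (u n - l) @[n --> \oo] --> (0 : R).

Definition mxcvg (m n : nat) (U : nat -> 'M[C]_(m, n)) (L : 'M[C]_(m, n)) :=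
  l1norm (U k - L) @[k --> \oo] --> (0 : R).

Lemma cvg0_squeeze (v w : nat -> R) :
  (forall n, 0 <= v n <= w n) -> w @ \oo --> 0 -> v @ \oo --> 0.
Proof. by move=> vw; apply: (squeeze_cvgr _ (cvg_cst 0)); apply: nearW. Qed.

Lemma cvg0_squeeze2 (v w1 w2 : nat -> R) :
  (forall n, 0 <= v n <= w1 n + w2 n) -> w1 @ \oo --> 0 -> w2 @ \oo --> 0 ->
  v @ \oo --> 0.
Proof. by move=> vw h1 h2; apply: cvg0_squeeze vw _; rewrite -[0]addr0; apply: cvgD. Qed.

Lemma cvg0_scale (c : R) (v : nat -> R) : v @ \oo --> 0 -> c * v n @[n --> \oo] --> 0.
Proof. by move=> h; rewrite -(mulr0 c); apply: cvgM => //; apply: cvg_cst. Qed.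

Lemma ccvg_Re u l : ccvg u l -> complex.Re (u n) @[n --> \oo] --> complex.Re l.
Proof.
move=> h; apply/subr_cvg0/norm_cvg0P; apply: cvg0_squeeze h => n.
by rewrite normr_ge0; move: (normc_ge_normRe (u n - l)); case: (u n); case: l.
Qed.

Lemma ccvg_Im u l : ccvg u l -> complex.Im (u n) @[n --> \oo] --> complex.Im l.
Proof.
move=> h; apply/subr_cvg0/norm_cvg0P; apply: cvg0_squeeze h => n.
by rewrite normr_ge0; move: (normc_ge_normIm (u n - l)); case: (u n); case: l.
Qed.

Lemma ccvg_clim u l : ccvg u l -> clim u = l.
Proof.
move=> h; rewrite /clim (cvg_lim _ (ccvg_Re h)) // (cvg_lim _ (ccvg_Im h)) //.
by case: l {h}.
Qed.

Lemma ccvg_unique u l k : ccvg u l -> ccvg u k -> l = k.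
Proof. by move=> /ccvg_clim <- /ccvg_clim <-. Qed.

Lemma cvg0_sum (I : Type) (s : seq I) (v : I -> nat -> R) :
  (forall i, v i @ \oo --> 0) -> (\sum_(i <- s) v i n) @[n --> \oo] --> 0.
Proof.
move=> h; elim: s => [|i s IH].
  under eq_cvg do rewrite big_nil.
  exact: cvg_cst.
under eq_cvg do rewrite big_cons.
by have := cvgD (h i) IH; rewrite addr0; apply.
Qed.

Lemma ccvg_ReIm u l : complex.Re (u n) @[n --> \oo] --> complex.Re l ->
  complex.Im (u n) @[n --> \oo] --> complex.Im l -> ccvg u l.
Proof.
move=> /subr_cvg0/(norm_cvg0P _).2 hr /subr_cvg0/(norm_cvg0P _).2 hi.
apply: cvg0_squeeze2 hr hi => n; rewrite normc_ge0 /=.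
by move: (normc_le_normReIm (u n - l)); case: (u n); case: l.
Qed.

Lemma ccvg_series (t : nat -> C) (b : nat -> R) :
  (forall k, normc (t k) <= b k) -> cvgn (series b) ->
  ccvg (fun N => \sum_(k < N) t k) (clim (fun N => \sum_(k < N) t k)).
Proof.
move=> tb cb; have b0 k : 0 <= b k by apply: le_trans (normc_ge0 _) (tb k).
have partialE (f : C -> R) : {morph f : x y / x + y} -> f 0 = 0 ->
    (fun N => f (\sum_(k < N) t k)) = series (fun k => f (t k)).
  move=> fD f0; apply/funext => N; rewrite /series /= big_mkord.
  by elim/big_rec2: _ => // k x y _ <-; rewrite fD.
have ReD : {morph @complex.Re R : x y / x + y} by move=> [? ?] [? ?].
have ImD : {morph @complex.Im R : x y / x + y} by move=> [? ?] [? ?].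
apply: ccvg_ReIm => /=.
- rewrite (partialE _ ReD erefl); apply: (@normed_cvg _ R^o).
  apply: (series_le_cvg _ b0 _ cb) => //= k.
  exact: le_trans (normc_ge_normRe _) (tb k).
- rewrite (partialE _ ImD erefl); apply: (@normed_cvg _ R^o).
  apply: (series_le_cvg _ b0 _ cb) => //= k.
  exact: le_trans (normc_ge_normIm _) (tb k).
Qed.

Lemma ccvgD u v l k : ccvg u l -> ccvg v k -> ccvg (fun n => u n + v n) (l + k).
Proof.
move=> hu hv; apply: cvg0_squeeze2 hu hv => n.
by rewrite normc_ge0 opprD addrACA le_normcD.
Qed.

Lemma ccvgN u l : ccvg u l -> ccvg (fun n => - u n) (- l).
Proof. by move=> hu; apply: cvg0_squeeze hu => n; rewrite -opprD normcN normc_ge0 lexx. Qed.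

Lemma ccvgB u v l k : ccvg u l -> ccvg v k -> ccvg (fun n => u n - v n) (l - k).
Proof. by move=> hu /ccvgN; apply: ccvgD. Qed.

Lemma ccvgMl c u l : ccvg u l -> ccvg (fun n => c * u n) (c * l).
Proof.
move=> /(cvg0_scale (normc c)); apply: cvg0_squeeze => n.
by rewrite -mulrBr normcM lexx andbT mulr_ge0 ?normc_ge0.
Qed.

Lemma ccvgM u v l k : ccvg u l -> ccvg v k -> ccvg (fun n => u n * v n) (l * k).
Proof.
move=> hu hv.
have huv : normc (u n - l) * normc (v n - k) @[n --> \oo] --> 0.
  by rewrite -(mulr0 0); apply: cvgM.
have hlin : normc l * normc (v n - k) + normc k * normc (u n - l) @[n --> \oo] --> 0.
  by rewrite -[0]addr0; apply: cvgD; apply: cvg0_scale.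
apply: cvg0_squeeze2 huv hlin => n; rewrite normc_ge0 -!normcM.
have -> : u n * v n - l * k = (u n - l) * (v n - k) + (l * (v n - k) + k * (u n - l)).
  by ring.
by apply: le_trans (le_normcD _ _) _; rewrite lerD2l le_normcD.
Qed.

Lemma ccvg_shiftS u l : ccvg (fun n => u n.+1) l -> ccvg u l.
Proof. by move=> h; rewrite /ccvg -cvg_shiftS. Qed.

Section MatrixConvergence.
Variables m n : nat.
Implicit Types U V : nat -> 'M[C]_(m, n).
Implicit Types L K W : 'M[C]_(m, n).

Lemma mxcvg_entry U L : (forall i j, ccvg (fun k => U k i j) (L i j)) -> mxcvg U L.
Proof.
move=> h; rewrite /mxcvg /l1norm; under eq_cvg do under eq_bigr do under eq_bigr do rewrite !mxE.
by apply: cvg0_sum => i; apply: cvg0_sum => j; apply: h.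
Qed.

Lemma mxcvg_unique U L K : mxcvg U L -> mxcvg U K -> L = K.
Proof.
have entry M : mxcvg U M -> forall i j, ccvg (fun k => U k i j) (M i j).
  move=> h i j; apply: cvg0_squeeze h => k.
  by rewrite normc_ge0 /=; have := ler_normc_l1norm (U k - M) i j; rewrite !mxE.
by move=> /entry hL /entry hK; apply/matrixP => i j; apply: ccvg_unique (hL i j) (hK i j).
Qed.

Lemma mxcvgD U V L K : mxcvg U L -> mxcvg V K -> mxcvg (fun k => U k + V k) (L + K).
Proof.
move=> hu hv; apply: cvg0_squeeze2 hu hv => k.
by rewrite l1norm_ge0 opprD addrACA ler_l1normD.
Qed.

Lemma mxcvgB U V L K : mxcvg U L -> mxcvg V K -> mxcvg (fun k => U k - V k) (L - K).
Proof.
move=> hu hv; apply: mxcvgD hu _; apply: cvg0_squeeze hv => k.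
by rewrite -opprD l1normN l1norm_ge0 lexx.
Qed.

Lemma mxcvgZl (u : nat -> C) l (M : 'M[C]_(m, n)) :
  ccvg u l -> mxcvg (fun k => u k *: M) (l *: M).
Proof.
move=> /(cvg0_scale (l1norm M)); apply: cvg0_squeeze => k.
by rewrite -scalerBl l1normZ mulrC lexx andbT mulr_ge0 ?l1norm_ge0 ?normc_ge0.
Qed.

Lemma mxcvg_sum (I : Type) (s : seq I) (U : I -> nat -> 'M[C]_(m, n)) (L : I -> 'M[C]_(m, n)) :
  (forall i, mxcvg (U i) (L i)) -> mxcvg (fun k => \sum_(i <- s) U i k) (\sum_(i <- s) L i).
Proof.
move=> h; apply: (cvg0_squeeze (w := fun k => \sum_(i <- s) l1norm (U i k - L i))).
  by move=> k; rewrite l1norm_ge0 -sumrB ler_l1norm_sum.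
exact: cvg0_sum.
Qed.

Lemma mxcvg_shiftn N U L : mxcvg (fun k => U (k + N)%N) L -> mxcvg U L.
Proof. by move=> h; rewrite /mxcvg -(cvg_shiftn N). Qed.

Lemma mxcvg_le U L W (c : R) :
  mxcvg U L -> (forall k, l1norm (U k - W) <= c) -> l1norm (L - W) <= c.
Proof.
move=> hU hb; apply/ler_addgt0Pr => e e0.
have [N _ HN] := (cvgrPdist_le _ _).1 hU e e0.
have -> : L - W = (U N - W) - (U N - L) by rewrite opprB [RHS]addrC addrA subrK.
apply: le_trans (ler_l1normD _ _) _; rewrite l1normN lerD //.
by have := HN N (leqnn N); rewrite sub0r normrN ger0_norm ?l1norm_ge0.
Qed.

End MatrixConvergence.
End Convergence.

Definition exp_sum (F : numFieldType) (N : nat) (z : F) := \sum_(k < N) (k`!%:R)^-1 * z ^+ k.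

Definition expm_sum (F : numFieldType) (m N : nat) (X : 'M[F]_m) :=
  \sum_(k < N) (k`!%:R)^-1 *: X ^+ k.

Lemma sum_triangle (V : zmodType) (g : nat -> nat -> V) N :
  \sum_(0 <= k < N) \sum_(0 <= i < k.+1) g (k - i)%N i =
  \sum_(0 <= a < N) \sum_(0 <= b < N - a) g a b.
Proof.
elim: N => [|N IH]; first by rewrite !big_geq.
rewrite big_nat_recr //= IH [RHS]big_nat_recr //= subSnn big_nat1.
have -> : \sum_(0 <= a < N) \sum_(0 <= b < N.+1 - a) g a b =
          \sum_(0 <= a < N) \sum_(0 <= b < N - a) g a b + \sum_(0 <= a < N) g a (N - a)%N.
  rewrite -big_split /=; apply: eq_big_nat => a /andP[_ aN].
  by rewrite subSn ?(ltnW aN) // big_nat_recr.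
rewrite -addrA; congr (_ + _); rewrite big_nat_rev /=.
rewrite (eq_big_nat _ _ (F2 := fun i => g i (N - i)%N)); last first.
  by move=> i /andP[_ iN]; rewrite add0n subSS subKn.
by rewrite big_nat_recr //= subnn.
Qed.

Lemma exp_sumD (F : numFieldType) (x y : F) N :
  exp_sum N (x + y) = \sum_(0 <= a < N) \sum_(0 <= b < N - a)
     ((a`!%:R)^-1 * x ^+ a) * ((b`!%:R)^-1 * y ^+ b).
Proof.
rewrite /exp_sum -(big_mkord xpredT (fun k => (k`!%:R)^-1 * (x + y) ^+ k)).
rewrite -(sum_triangle (fun a b => ((a`!%:R)^-1 * x ^+ a) * ((b`!%:R)^-1 * y ^+ b))).
apply: eq_big_nat => k _; rewrite exprDn mulr_sumr big_mkord; apply: eq_bigr => i _.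
have ik : (i <= k)%N by rewrite -ltnS ltn_ord.
rewrite -(bin_fact ik) !natrM -mulr_natl.
have h1 : ('C(k, i))%:R != 0 :> F by rewrite pnatr_eq0 -lt0n bin_gt0.
have h2 : (i`!)%:R != 0 :> F by rewrite pnatr_eq0 -lt0n fact_gt0.
have h3 : ((k - i)`!)%:R != 0 :> F by rewrite pnatr_eq0 -lt0n fact_gt0.
by field; rewrite h1 h2 h3.
Qed.

Lemma exp_sumM_sub (F : numFieldType) (x y : F) N :
  exp_sum N x * exp_sum N y - exp_sum N (x + y) =
  \sum_(0 <= a < N) \sum_(N - a <= b < N)
     ((a`!%:R)^-1 * x ^+ a) * ((b`!%:R)^-1 * y ^+ b).
Proof.
rewrite exp_sumD /exp_sum mulr_suml -(big_mkord xpredT (fun a => (a`!%:R)^-1 * x ^+ a * _)).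
rewrite -sumrB; apply: eq_big_nat => a /andP[_ aN].
rewrite mulr_sumr -(big_mkord xpredT (fun b => (a`!%:R)^-1 * x ^+ a * ((b`!%:R)^-1 * y ^+ b))).
by rewrite (@big_cat_nat _ _ _ (N - a)) ?leq_subr //= addrAC subrr add0r.
Qed.

Section Exponential.
Variable R : realType.
Local Notation C := R[i].

Lemma normcX (z : C) k : normc (z ^+ k) = normc z ^+ k.
Proof. by elim: k => [|k IH]; rewrite ?normc1 // !exprS normcM IH. Qed.

Lemma normc_invf_fact k : normc ((k`!%:R)^-1 : C) = (k`!%:R)^-1.
Proof. by rewrite normcV normc_nat. Qed.

Lemma exp_sum_seriesE (x : R) N : exp_sum N x = series (exp_coeff x) N.
Proof.
rewrite /exp_sum /series /= big_mkord.
by apply: eq_bigr => k _; rewrite /exp_coeff /= mulrC.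
Qed.

Lemma exp_sum_cvg (x : R) : exp_sum N x @[N --> \oo] --> expR x.
Proof. by under eq_cvg do rewrite exp_sum_seriesE; apply: is_cvg_series_exp_coeff. Qed.

Lemma exp_sum_le_expR (x : R) N : 0 <= x -> exp_sum N x <= expR x.
Proof.
move=> x0; rewrite exp_sum_seriesE.
apply: (nondecreasing_cvgn_le _ (is_cvg_series_exp_coeff x)).
by apply: nondecreasing_series => n _ _; apply: exp_coeff_ge0.
Qed.

Lemma cvg_series_exp_termZ (c x : R) :
  cvgn (series (fun k => c * ((k`!%:R)^-1 * x ^+ k))).
Proof.
rewrite (_ : (fun k => _) = c *: exp_coeff x).
  exact: is_cvg_seriesZ (is_cvg_series_exp_coeff x).
by apply/funext => k /=; rewrite /exp_coeff /= [_ * x ^+ k]mulrC.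
Qed.

Lemma cexp_cvg (z : C) : ccvg (fun N => exp_sum N z) (cexp z).
Proof.
apply: (ccvg_series (t := fun k => (k`!%:R)^-1 * z ^+ k)
  (b := fun k => 1 * ((k`!%:R)^-1 * normc z ^+ k))).
  by move=> k; rewrite mul1r normcM normc_invf_fact normcX.
exact: cvg_series_exp_termZ.
Qed.

Lemma expm_cvg m (X : 'M[C]_m) : mxcvg (fun N => expm_sum N X) (expm X).
Proof.
apply: mxcvg_entry => i j; rewrite /expm mxE.
under [fun N => expm_sum N X i j]funext do rewrite /expm_sum summxE.
apply: (ccvg_series (t := fun k => ((k`!%:R)^-1 *: X ^+ k) i j)
  (b := fun k => m%:R * ((k`!%:R)^-1 * l1norm X ^+ k))); last first.
  exact: cvg_series_exp_termZ.
move=> k; rewrite mxE normcM normc_invf_fact mulrCA ler_wpM2l ?invr_ge0 ?ler0n //.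
exact: le_trans (ler_normc_l1norm _ i j) (ler_l1norm_expr X k).
Qed.

Lemma cexpD (x y : C) : cexp (x + y) = cexp x * cexp y.
Proof.
(* The defect of the Cauchy product is dominated termwise by the same defect for the moduli,
   which vanishes because [expR] is additive. *)
have hprod := ccvgB (ccvgM (cexp_cvg x) (cexp_cvg y)) (cexp_cvg (x + y)).
apply/eqP; rewrite eq_sym -subr_eq0; apply/eqP/(ccvg_unique hprod).
pose X := normc x; pose Y := normc y.
have hR : exp_sum N X * exp_sum N Y - exp_sum N (X + Y) @[N --> \oo] --> (0 : R).
  rewrite -(subrr (expR X * expR Y)) -[X in _ - X]expRD.
  by apply: cvgB; [apply: cvgM|]; apply: exp_sum_cvg.
apply: cvg0_squeeze hR => N; rewrite normc_ge0 subr0 !exp_sumM_sub /=.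
apply: le_trans (ler_normc_sum _ _ _) _; apply: ler_sum => a _.
apply: le_trans (ler_normc_sum _ _ _) _; apply: ler_sum => b _.
by rewrite !normcM !normc_invf_fact !normcX.
Qed.

Lemma expm0 m : expm (0 : 'M[C]_m) = 1%:M.
Proof.
apply: mxcvg_unique (expm_cvg 0) (mxcvg_shiftn (N := 1) _).
have -> : (fun k => expm_sum (k + 1) (0 : 'M[C]_m)) = fun=> 1%:M.
  apply/funext => k; rewrite addn1 /expm_sum big_ord_recl /= expr0 fact0 invr1 scale1r.
  by rewrite big1 ?addr0 // => i _; rewrite exprS mul0r scaler0.
by rewrite /mxcvg subrr l1norm0; apply: cvg_cst.
Qed.

End Exponential.

Section FirstOrder.
Variable R : realType.
Local Notation C := R[i].
Variable m : nat.
Implicit Types A B X : 'M[C]_m.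

Lemma mxexprSr X k : X ^+ k.+1 = X ^+ k *m X.
Proof. by rewrite exprSr. Qed.

(* The part of [(A + B) ^+ k] that is linear in [B]: the sum of the words [A^i B A^(k-1-i)]. *)
Fixpoint pow_deriv A B k : 'M[C]_m :=
  if k is k'.+1 then pow_deriv A B k' *m A + A ^+ k' *m B else 0.

Definition pow_rem A B k := (A + B) ^+ k - A ^+ k - pow_deriv A B k.

Lemma pow_remS A B k : pow_rem A B k.+1 = pow_deriv A B k *m B + pow_rem A B k *m (A + B).
Proof.
rewrite /pow_rem /= !mxexprSr !mulmxBl (mulmxDr (A ^+ k)) (mulmxDr (pow_deriv A B k)).
move: (_ *m A) (_ *m A) (_ *m B) (_ *m B) ((A + B) ^+ k *m (A + B)) => u v w z t.
by rewrite !opprD !addrA -!(addrA w) [RHS]addrC subrK addrAC.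
Qed.

Lemma ler_pow_deriv A B k :
  l1norm (pow_deriv A B k) <= k%:R * (l1norm A + l1norm B) ^+ k.-1 * l1norm B.
Proof.
set c := l1norm A + l1norm B.
have a0 := l1norm_ge0 A; have b0 := l1norm_ge0 B.
have ac : l1norm A <= c by rewrite lerDl.
have c0 : 0 <= c by rewrite addr_ge0.
elim: k => [|k IH] /=; first by rewrite l1norm0 !mul0r.
apply: le_trans (ler_l1normD _ _) _.
have h1 : l1norm (pow_deriv A B k *m A) <= k%:R * c ^+ k * l1norm B.
  apply: le_trans (ler_l1normM _ _) _; apply: le_trans (ler_pM (l1norm_ge0 _) a0 IH ac) _.
  by case: k {IH} => [|k]; rewrite ?mul0r ?mulr0 //= mulrAC -(mulrA _ (c ^+ k)) -exprSr.
have h2 : l1norm (A ^+ k *m B) <= c ^+ k * l1norm B.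
  apply: le_trans (ler_l1norm_exprMl _ _ _) _; rewrite ler_wpM2r //.
  by apply: lerXn2r; rewrite ?nnegrE.
by apply: le_trans (lerD h1 h2) _; rewrite -natr1 !mulrDl mul1r.
Qed.

Lemma ler_pow_rem A B k :
  l1norm (pow_rem A B k) <= (k * k.-1)%:R * (l1norm A + l1norm B) ^+ k.-2 * l1norm B ^+ 2.
Proof.
set c := l1norm A + l1norm B.
have b0 := l1norm_ge0 B; have c0 : 0 <= c by rewrite addr_ge0 ?l1norm_ge0.
elim: k => [|k IH]; first by rewrite /pow_rem /= !expr0 subrr sub0r oppr0 l1norm0 !mul0r.
rewrite pow_remS; apply: le_trans (ler_l1normD _ _) _.
have h1 : l1norm (pow_deriv A B k *m B) <= k%:R * (c ^+ k.-1 * l1norm B ^+ 2).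
  apply: le_trans (ler_l1normM _ _) _.
  by apply: le_trans (ler_wpM2r b0 (ler_pow_deriv A B k)) _; rewrite expr2 !mulrA.
have h2 : l1norm (pow_rem A B k *m (A + B)) <= (k * k.-1)%:R * (c ^+ k.-1 * l1norm B ^+ 2).
  apply: le_trans (ler_l1normM _ _) _.
  apply: le_trans (ler_pM (l1norm_ge0 _) (l1norm_ge0 _) IH (ler_l1normD A B)) _.
  clear h1 IH; case: k => [|[|k]]; rewrite ?muln0 ?mul0r ?mul0n //=.
  by rewrite mulrAC -(mulrA _ (c ^+ k)) -exprSr mulrA.
apply: le_trans (lerD h1 h2) _; rewrite -mulrDl -natrD -mulrA ler_wpM2r //.
- by rewrite mulr_ge0 ?exprn_ge0.
- by rewrite ler_nat; clear; case: k => // k /=; lia.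
Qed.

Lemma sum_second_deriv_exp_le (c : R) N : 0 <= c ->
  \sum_(k < N) (k`!%:R)^-1 * ((k * k.-1)%:R * c ^+ k.-2) <= expR c.
Proof.
move=> c0; set f := fun k : nat => (k`!%:R)^-1 * ((k * k.-1)%:R * c ^+ k.-2).
have f0 k : 0 <= f k by rewrite /f mulr_ge0 ?invr_ge0 ?mulr_ge0 ?exprn_ge0.
apply: (@le_trans _ _ (\sum_(k < N.+2) f k)).
  by rewrite big_ord_recr /= big_ord_recr /= -addrA lerDl addr_ge0.
rewrite big_ord_recl big_ord_recl /f /= !mul0r !mulr0 !add0r.
apply: le_trans (exp_sum_le_expR N c0); rewrite le_eqVlt; apply/orP; left; apply/eqP.
apply: eq_bigr => k _; rewrite /bump /= !add1n !factS !natrM.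
have h1 : (k`!%:R : R) != 0 by rewrite pnatr_eq0 -lt0n fact_gt0.
field; rewrite h1 /=; apply/andP; split; apply: lt0r_neq0; have := ler0n R k; lra.
Qed.

Lemma ler_expm_sum_rem A B N :
  l1norm (expm_sum N (A + B) - expm_sum N A - \sum_(k < N) (k`!%:R)^-1 *: pow_deriv A B k)
    <= l1norm B ^+ 2 * expR (l1norm A + l1norm B).
Proof.
have -> : expm_sum N (A + B) - expm_sum N A - \sum_(k < N) (k`!%:R)^-1 *: pow_deriv A B k =
          \sum_(k < N) (k`!%:R)^-1 *: pow_rem A B k.
  by rewrite /expm_sum -!sumrB; apply: eq_bigr => k _; rewrite /pow_rem !scalerBr.
apply: le_trans (ler_l1norm_sum _ _ _) _.
apply: (@le_trans _ _ (\sum_(k < N) (k`!%:R)^-1 *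
   ((k * k.-1)%:R * (l1norm A + l1norm B) ^+ k.-2) * l1norm B ^+ 2)).
  apply: ler_sum => k _; rewrite l1normZ normc_invf_fact -!mulrA ler_wpM2l ?invr_ge0 ?ler0n //.
  by rewrite mulrA; apply: ler_pow_rem.
rewrite -mulr_suml mulrC ler_wpM2l ?sqr_ge0 //.
by apply: sum_second_deriv_exp_le; rewrite addr_ge0 ?l1norm_ge0.
Qed.

Lemma ler_expm_first_order A B L :
  mxcvg (fun N => \sum_(k < N) (k`!%:R)^-1 *: pow_deriv A B k) L ->
  l1norm (expm (A + B) - expm A - L) <= l1norm B ^+ 2 * expR (l1norm A + l1norm B).
Proof.
move=> hL; rewrite -[_ - L]subr0.
apply: mxcvg_le (mxcvgB (mxcvgB (expm_cvg (A + B)) (expm_cvg A)) hL) _ => N.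
by rewrite subr0; apply: ler_expm_sum_rem.
Qed.

Lemma ler_expm_sub1 X : l1norm (expm X - 1%:M - X) <= l1norm X ^+ 2 * expR (l1norm X).
Proof.
(* The first-order estimate at [A = 0], where the first-order partial sums are eventually [X]. *)
rewrite -expm0 -[X in expm X]add0r -[X in expR X]add0r -(l1norm0 _ m m).
apply: ler_expm_first_order; apply: (mxcvg_shiftn (N := 2)).
have -> : (fun N => \sum_(k < N + 2) (k`!%:R)^-1 *: pow_deriv 0 X k) = fun=> X.
  apply/funext => N; rewrite addn2 big_ord_recl big_ord_recl /= big1.
    by rewrite scaler0 add0r mulmx0 add0r expr0 mul1mx factS fact0 muln1 invr1 scale1r addr0.
  by move=> k _; rewrite mulmx0 add0r exprS mul0r mul0mx scaler0.
by rewrite /mxcvg subrr l1norm0; apply: cvg_cst.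
Qed.

End FirstOrder.

Fixpoint divdiff_pow (F : comPzRingType) (x y : F) k : F :=
  if k is k'.+1 then divdiff_pow x y k' * y + x ^+ k' else 0.

Lemma divdiff_powE (F : comPzRingType) (x y : F) k :
  (x - y) * divdiff_pow x y k = x ^+ k - y ^+ k.
Proof.
elim: k => [|k IH] /=; first by rewrite mulr0 !expr0 subrr.
by rewrite mulrDr mulrA IH !exprSr; ring.
Qed.

Lemma divdiff_pow_diag (F : comPzRingType) (x : F) k :
  divdiff_pow x x k.+1 = k.+1%:R * x ^+ k.
Proof.
elim: k => [|k IH]; first by rewrite /= mul0r add0r mulr1.
by rewrite -[LHS]/(divdiff_pow x x k.+1 * x + x ^+ k.+1) IH exprSr -natr1; ring.
Qed.

Section DividedDifference.
Variable R : realType.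
Local Notation C := R[i].

Definition divdiff_cexp (x y : C) := if x == y then cexp x else (cexp x - cexp y) / (x - y).

Lemma divdiff_cexp_cvg x y :
  ccvg (fun N => \sum_(k < N) (k`!%:R)^-1 * divdiff_pow x y k) (divdiff_cexp x y).
Proof.
rewrite /divdiff_cexp; case: eqVneq => [<-|xy].
  apply: ccvg_shiftS; suff -> : (fun N => \sum_(k < N.+1) (k`!%:R)^-1 * divdiff_pow x x k) =
    (fun N => exp_sum N x) by apply: cexp_cvg.
  apply/funext => N; rewrite big_ord_recl [divdiff_pow _ _ ord0]/= mulr0 add0r.
  apply: eq_bigr => k _; rewrite lift0 divdiff_pow_diag factS natrM.
  by rewrite invfM mulrACA mulVf ?mul1r ?pnatr_eq0.
have xy0 : x - y != 0 by rewrite subr_eq0.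
rewrite mulrC; suff -> : (fun N => \sum_(k < N) (k`!%:R)^-1 * divdiff_pow x y k) =
  (fun N => (x - y)^-1 * (exp_sum N x - exp_sum N y)).
  by apply: ccvgMl; apply: ccvgB; apply: cexp_cvg.
apply/funext => N; rewrite /exp_sum -sumrB mulr_sumr; apply: eq_bigr => k _.
by rewrite -mulrBr -divdiff_powE mulrCA mulKf.
Qed.

End DividedDifference.

Section SpectralCalculus.
Variable R : realType.
Local Notation C := R[i].
Variables (m r : nat) (P : 'I_r -> 'M[C]_m).
Hypothesis P_proj : forall i j, P i *m P j = if i == j then P i else 0.
Hypothesis P_sum : \sum_i P i = 1%:M.
Implicit Types (f : 'I_r -> C) (g h : 'I_r -> 'I_r -> C) (X : 'M[C]_m).

(* [fcalc f] is [f(A)] for [A := fcalc a]; [schur g] multiplies the block [P j X P k] of [X]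
   by [g j k], so that [dcl a P = schur P (ell a)]. *)
Definition fcalc f := \sum_p f p *: P p.

Definition schur g X := \sum_j \sum_k g j k *: (P j *m X *m P k).

Lemma proj_mul_fcalc f k : P k *m fcalc f = f k *: P k.
Proof.
rewrite mulmx_sumr (bigD1 k) //= -scalemxAr P_proj eqxx big1 ?addr0 // => p /negbTE.
by rewrite -scalemxAr P_proj eq_sym => ->; rewrite scaler0.
Qed.

Lemma fcalc_mul_proj f k : fcalc f *m P k = f k *: P k.
Proof.
rewrite mulmx_suml (bigD1 k) //= -scalemxAl P_proj eqxx big1 ?addr0 // => p /negbTE.
by rewrite -scalemxAl P_proj => ->; rewrite scaler0.
Qed.

Lemma fcalc_expr f k : fcalc f ^+ k = fcalc (fun p => f p ^+ k).
Proof.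
elim: k => [|k IH].
  rewrite expr0 -[1]/(1%:M : 'M[C]_m) -P_sum.
  by apply: eq_bigr => p _; rewrite expr0 scale1r.
rewrite mxexprSr IH mulmx_suml; apply: eq_bigr => p _.
by rewrite -scalemxAl proj_mul_fcalc scalerA exprSr.
Qed.

Lemma expm_fcalc f : expm (fcalc f) = fcalc (fun p => cexp (f p)).
Proof.
apply: mxcvg_unique (expm_cvg _) _.
have -> : (fun N => expm_sum N (fcalc f)) = fun N => fcalc (fun p => exp_sum N (f p)).
  apply/funext => N; rewrite /expm_sum /fcalc.
  under eq_bigr do rewrite fcalc_expr scaler_sumr.
  rewrite exchange_big; apply: eq_bigr => p _.
  by rewrite scaler_suml; under eq_bigr do rewrite scalerA.
by apply: mxcvg_sum => p; apply: mxcvgZl; apply: cexp_cvg.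
Qed.

Lemma proj_schur_proj g X j k : P j *m schur g X *m P k = g j k *: (P j *m X *m P k).
Proof.
have PXP p q : g p q *: (P j *m (P p *m X *m P q) *m P k) =
    if q == k then if p == j then g j k *: (P j *m X *m P k) else 0 else 0.
  rewrite !mulmxA -(mulmxA _ (P q)) !P_proj.
  by case: (eqVneq p j) => [->|_]; case: (eqVneq q k) => [->|_];
    rewrite ?mulmx0 ?mul0mx ?scaler0.
rewrite /schur mulmx_sumr mulmx_suml.
under eq_bigr => p _.
  rewrite mulmx_sumr mulmx_suml.
  under eq_bigr => q _ do rewrite -scalemxAr -scalemxAl PXP.
  rewrite -big_mkcond big_pred1_eq.
  over.
by rewrite -big_mkcond big_pred1_eq.
Qed.

Lemma schur1 X : schur (fun _ _ => 1) X = X.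
Proof.
rewrite /schur (eq_bigr (fun j => P j *m X)); first by rewrite -mulmx_suml P_sum mul1mx.
by move=> j _; under eq_bigr do rewrite scale1r; rewrite -mulmx_sumr P_sum mulmx1.
Qed.

Lemma schur_comp g h X : schur g (schur h X) = schur (fun j k => g j k * h j k) X.
Proof.
by apply: eq_bigr => j _; apply: eq_bigr => k _; rewrite proj_schur_proj scalerA.
Qed.

Lemma schur_mul_fcalc g f X : schur g X *m fcalc f = schur (fun j k => g j k * f k) X.
Proof.
rewrite mulmx_suml; apply: eq_bigr => j _; rewrite mulmx_suml; apply: eq_bigr => k _.
by rewrite -scalemxAl -mulmxA proj_mul_fcalc -scalemxAr scalerA.
Qed.

Lemma fcalc_mul_schur f g X : fcalc f *m schur g X = schur (fun j k => f j * g j k) X.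
Proof.
rewrite mulmx_sumr; apply: eq_bigr => j _; rewrite mulmx_sumr; apply: eq_bigr => k _.
by rewrite -scalemxAr !mulmxA fcalc_mul_proj -!scalemxAl scalerA mulrC.
Qed.

Lemma schur_bounded g : exists2 K, 0 <= K & forall X, l1norm (schur g X) <= K * l1norm X.
Proof.
exists (\sum_j \sum_k normc (g j k) * (l1norm (P j) * l1norm (P k))).
  by do 2![apply: sumr_ge0 => ? _]; rewrite !mulr_ge0 ?normc_ge0 ?l1norm_ge0.
move=> X; rewrite mulr_suml; apply: le_trans (ler_l1norm_sum _ _ _) _; apply: ler_sum => j _.
rewrite mulr_suml; apply: le_trans (ler_l1norm_sum _ _ _) _; apply: ler_sum => k _.
rewrite l1normZ -mulrA ler_wpM2l ?normc_ge0 //.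
apply: le_trans (ler_l1normM _ _) _; rewrite mulrAC ler_wpM2r ?l1norm_ge0 //.
exact: ler_l1normM.
Qed.

Lemma pow_deriv_fcalc f X k :
  pow_deriv (fcalc f) X k = schur (fun p q => divdiff_pow (f p) (f q) k) X.
Proof.
elim: k => [|k IH] /=.
  by rewrite /schur big1 // => p _; rewrite big1 // => q _; rewrite scale0r.
rewrite IH schur_mul_fcalc fcalc_expr -[X in _ *m X]schur1 fcalc_mul_schur.
rewrite /schur -big_split; apply: eq_bigr => p _; rewrite -big_split; apply: eq_bigr => q _.
by rewrite mulr1 scalerDl.
Qed.

Lemma eq_schur g h X : g =2 h -> schur g X = schur h X.
Proof. by move=> gh; apply: eq_bigr => j _; apply: eq_bigr => k _; rewrite gh. Qed.

Lemma schur_sumZ (I : Type) (s : seq I) (c : I -> C) (G : I -> 'I_r -> 'I_r -> C) X :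
  \sum_(i <- s) c i *: schur (G i) X = schur (fun j k => \sum_(i <- s) c i * G i j k) X.
Proof.
rewrite /schur; under eq_bigr do rewrite scaler_sumr.
rewrite exchange_big; apply: eq_bigr => j _; under eq_bigr do rewrite scaler_sumr.
rewrite exchange_big; apply: eq_bigr => k _.
by rewrite scaler_suml; under eq_bigr do rewrite scalerA.
Qed.

Lemma mxcvg_schur (G : nat -> 'I_r -> 'I_r -> C) g X :
  (forall j k, ccvg (fun N => G N j k) (g j k)) -> mxcvg (fun N => schur (G N) X) (schur g X).
Proof. by move=> hG; do 2![apply: mxcvg_sum => ?]; apply: mxcvgZl. Qed.

End SpectralCalculus.

Section ExpDividedDifference.
Variable R : realType.
Local Notation C := R[i].
Variables (r : nat) (a : 'I_r -> C).
Hypothesis a_inj : injective a.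

Lemma divdiff_cexp_ell p q : divdiff_cexp (a p) (a q) = ell a p q * cexp (a q).
Proof.
rewrite /divdiff_cexp /ell (inj_eq a_inj).
have [->|_] := eqVneq p q; first by rewrite mul1r.
have -> : cexp (a p) = cexp (a p - a q) * cexp (a q) by rewrite -cexpD subrK.
move: (cexp (a p - a q)) (cexp (a q)) => E Y.
by move: (a p - a q) => d; ring.
Qed.

Lemma divdiff_cexp_ellC p q : divdiff_cexp (a p) (a q) = cexp (a p) * ell a q p.
Proof.
rewrite /divdiff_cexp /ell (inj_eq a_inj).
have [_|_] := eqVneq p q; first by rewrite mulr1.
have -> : cexp (a q) = cexp (a q - a p) * cexp (a p) by rewrite -cexpD subrK.
move: (cexp (a q - a p)) (cexp (a p)) => E X; rewrite -(opprB (a p)) invrN.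
by move: (a p - a q) => d; ring.
Qed.

Lemma ell_neq0 : (forall j k, j != k -> cexp (a j - a k) != 1) -> forall j k, ell a j k != 0.
Proof.
move=> h j k; rewrite /ell; have [_|jk] := eqVneq j k; first exact: oner_neq0.
have d0 : a j - a k != 0 by rewrite subr_eq0 (inj_eq a_inj).
by rewrite mulf_neq0 ?invr_eq0 // subr_eq0 h.
Qed.

End ExpDividedDifference.

Lemma ler_mul_div_succ (R : realFieldType) (a x e : R) :
  0 <= a -> 0 <= x -> x <= e / (a + 1) -> a * x <= e.
Proof.
move=> a0 x0 xe; have a1 : 0 < a + 1 by rewrite ltr_wpDl.
apply: le_trans (_ : a * x <= (a + 1) * x) _; first by rewrite ler_wpM2r // lerDl.
by rewrite mulrC -ler_pdivlMr.
Qed.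

Section LocalQuadratic.
Variable R : realType.
Local Notation C := R[i].
Variable m : nat.
Implicit Types F G H : 'M[C]_m -> 'M[C]_m.

Definition l1bigO2 F G := exists2 c : R, 0 <= c & exists2 rho : R, 0 < rho &
  forall B, l1norm B <= rho -> l1norm (F B - G B) <= c * l1norm B ^+ 2.

Lemma l1bigO2_bigO2 F G : l1bigO2 F G -> bigO2 F G.
Proof.
move=> [c c0 [rho rho0 hFG]]; set k : R := (m * m)%:R; have k0 : 0 <= k by apply: ler0n.
exists (c * k ^+ 2); exists (rho / (k + 1)); first by rewrite divr_gt0 // ltr_wpDl.
move=> B hB; have hBk := l1norm_le_frob B; have f0 : 0 <= frob B by apply: sqrtr_ge0.
have hBrho : l1norm B <= rho by apply: le_trans hBk (ler_mul_div_succ k0 f0 (ltW hB)).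
apply: le_trans (frob_le_l1norm _) _; apply: le_trans (hFG B hBrho) _.
by rewrite -mulrA ler_wpM2l // -exprMn; apply: lerXn2r; rewrite ?nnegrE ?l1norm_ge0 ?mulr_ge0.
Qed.

Lemma l1bigO2_sym F G : l1bigO2 F G -> l1bigO2 G F.
Proof. by move=> [c c0 [rho rho0 h]]; exists c => //; exists rho => // B /h; rewrite l1normB. Qed.

Lemma l1bigO2_trans F G H : l1bigO2 F G -> l1bigO2 G H -> l1bigO2 F H.
Proof.
move=> [c1 c10 [rho1 rho10 h1]] [c2 c20 [rho2 rho20 h2]].
exists (c1 + c2); first exact: addr_ge0.
exists (Num.min rho1 rho2); first by rewrite lt_min rho10.
move=> B; rewrite le_min => /andP[/h1 hB1 /h2 hB2].
have -> : F B - H B = (F B - G B) + (G B - H B) by rewrite addrA subrK.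
by apply: le_trans (ler_l1normD _ _) _; rewrite mulrDl lerD.
Qed.

Lemma l1bigO2_comp F G (T : 'M[C]_m -> 'M[C]_m) (K : R) : 0 <= K ->
  (forall B, l1norm (T B) <= K * l1norm B) ->
  l1bigO2 F G -> l1bigO2 (fun B => F (T B)) (fun B => G (T B)).
Proof.
move=> K0 hT [c c0 [rho rho0 h]]; exists (c * K ^+ 2); first by rewrite mulr_ge0 ?sqr_ge0.
exists (rho / (K + 1)); first by rewrite divr_gt0 // ltr_wpDl.
move=> B hB; have hTB : l1norm (T B) <= rho.
  exact: le_trans (hT B) (ler_mul_div_succ K0 (l1norm_ge0 B) hB).
apply: le_trans (h _ hTB) _; rewrite -mulrA ler_wpM2l // -exprMn.
by apply: lerXn2r; rewrite ?nnegrE ?l1norm_ge0 ?mulr_ge0 ?l1norm_ge0.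
Qed.

Lemma l1bigO2_mulmxr F G (M : 'M[C]_m) :
  l1bigO2 F G -> l1bigO2 (fun B => F B *m M) (fun B => G B *m M).
Proof.
move=> [c c0 [rho rho0 h]]; exists (c * l1norm M); first by rewrite mulr_ge0 ?l1norm_ge0.
exists rho => // B /h hB; rewrite -mulmxBl; apply: le_trans (ler_l1normM _ _) _.
by rewrite mulrAC ler_wpM2r ?l1norm_ge0.
Qed.

Lemma l1bigO2_mulmxl F G (M : 'M[C]_m) :
  l1bigO2 F G -> l1bigO2 (fun B => M *m F B) (fun B => M *m G B).
Proof.
move=> [c c0 [rho rho0 h]]; exists (l1norm M * c); first by rewrite mulr_ge0 ?l1norm_ge0.
exists rho => // B /h hB; rewrite -mulmxBr; apply: le_trans (ler_l1normM _ _) _.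
by rewrite -mulrA ler_wpM2l ?l1norm_ge0.
Qed.

Lemma eq_l1bigO2 F G F' G' : l1bigO2 F G -> F =1 F' -> G =1 G' -> l1bigO2 F' G'.
Proof. by move=> hFG /funext <- /funext <-. Qed.

Lemma expm_near1 : l1bigO2 (@expm R m) (fun X => 1%:M + X).
Proof.
exists (expR 1); first exact: expR_ge0.
exists 1 => // X hX; rewrite opprD addrA mulrC.
by apply: le_trans (ler_expm_sub1 X) _; rewrite ler_wpM2l ?sqr_ge0 // ler_expR.
Qed.

End LocalQuadratic.

Section Decomposition.
Variable R : realType.
Local Notation C := R[i].
Variables (m r : nat) (A : 'M[C]_m) (a : 'I_r -> C) (P : 'I_r -> 'M[C]_m).
Hypothesis a_inj : injective a.
Hypothesis P_proj : forall i j, P i *m P j = if i == j then P i else 0.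
Hypothesis P_sum : \sum_i P i = 1%:M.
Hypothesis A_dec : A = fcalc P a.
Implicit Type X : 'M[C]_m.

Lemma dclE X : dcl a P X = schur P (ell a) X. Proof. by []. Qed.
Lemma dcrE X : dcr a P X = schur P (fun j k => ell a k j) X. Proof. by []. Qed.
Lemma cmlE X : cml a P X = schur P (fun j k => (ell a j k)^-1) X. Proof. by []. Qed.
Lemma cmrE X : cmr a P X = schur P (fun j k => (ell a k j)^-1) X. Proof. by []. Qed.

(* The Frechet derivative of [expm] at [A] (Daleckii-Krein formula). *)
Definition dexpm (X : 'M[C]_m) := schur P (fun p q => divdiff_cexp (a p) (a q)) X.

Lemma expm_first_order :
  l1bigO2 (fun B => expm (A + B)) (fun B => expm A + dexpm B).
Proof.
have hL B : mxcvg (fun N => \sum_(k < N) (k`!%:R)^-1 *: pow_deriv A B k) (dexpm B).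
  rewrite A_dec; under [fun N => _]funext do under eq_bigr do rewrite pow_deriv_fcalc //.
  under [fun N => _]funext do rewrite schur_sumZ.
  by apply: mxcvg_schur => p q; apply: divdiff_cexp_cvg.
exists (expR (l1norm A + 1)); first exact: expR_ge0.
exists 1 => // B hB; rewrite opprD addrA mulrC.
by apply: le_trans (ler_expm_first_order (hL B)) _; rewrite ler_wpM2l ?sqr_ge0 // ler_expR lerD2l.
Qed.

Lemma dcl_mul_expm B : dcl a P B *m expm A = dexpm B.
Proof.
rewrite A_dec expm_fcalc // dclE schur_mul_fcalc //.
by apply: eq_schur => p q; rewrite divdiff_cexp_ell.
Qed.

Lemma expm_mul_dcr B : expm A *m dcr a P B = dexpm B.
Proof.
rewrite A_dec expm_fcalc // dcrE fcalc_mul_schur //.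
by apply: eq_schur => p q; rewrite divdiff_cexp_ellC.
Qed.

Lemma expm_decomposition_left :
  l1bigO2 (fun B => expm (A + B)) (fun B => expm (dcl a P B) *m expm A).
Proof.
have [K K0 hK] := schur_bounded P (ell a).
have hdcl := l1bigO2_mulmxr (expm A) (l1bigO2_comp K0 hK (@expm_near1 R m)).
apply: l1bigO2_trans expm_first_order (l1bigO2_sym (eq_l1bigO2 hdcl _ _)) => B //.
by rewrite mulmxDl mul1mx -dcl_mul_expm.
Qed.

Lemma expm_decomposition_right :
  l1bigO2 (fun B => expm (A + B)) (fun B => expm A *m expm (dcr a P B)).
Proof.
have [K K0 hK] := schur_bounded P (fun p q => ell a q p).
have hdcr := l1bigO2_mulmxl (expm A) (l1bigO2_comp K0 hK (@expm_near1 R m)).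
apply: l1bigO2_trans expm_first_order (l1bigO2_sym (eq_l1bigO2 hdcr _ _)) => B //.
by rewrite mulmxDr mulmx1 -expm_mul_dcr.
Qed.

Hypothesis ell_neq0 : forall j k, ell a j k != 0.

Lemma dcl_cml B : dcl a P (cml a P B) = B.
Proof.
rewrite dclE cmlE schur_comp // -[RHS](schur1 P_sum).
by apply: eq_schur => j k; rewrite mulfV.
Qed.

Lemma dcr_cmr B : dcr a P (cmr a P B) = B.
Proof.
rewrite dcrE cmrE schur_comp // -[RHS](schur1 P_sum).
by apply: eq_schur => j k; rewrite mulfV.
Qed.

Lemma expm_composition_left :
  l1bigO2 (fun B => expm B *m expm A) (fun B => expm (A + cml a P B)).
Proof.
have [K K0 hK] := schur_bounded P (fun j k => (ell a j k)^-1).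
apply: eq_l1bigO2 (l1bigO2_sym (l1bigO2_comp K0 hK expm_decomposition_left)) _ (frefl _).
by move=> B; rewrite dcl_cml.
Qed.

Lemma expm_composition_right :
  l1bigO2 (fun B => expm A *m expm B) (fun B => expm (A + cmr a P B)).
Proof.
have [K K0 hK] := schur_bounded P (fun j k => (ell a k j)^-1).
apply: eq_l1bigO2 (l1bigO2_sym (l1bigO2_comp K0 hK expm_decomposition_right)) _ (frefl _).
by move=> B; rewrite dcr_cmr.
Qed.

End Decomposition.

Theorem theorem1 (R : realType) (m r : nat) (A : 'M[R[i]]_m)
    (a : 'I_r -> R[i]) (P : 'I_r -> 'M[R[i]]_m)
    (a_inj : injective a)
    (P_neq0 : forall i, P i != 0)
    (P_proj : forall i j, P i *m P j = if i == j then P i else 0)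
    (P_sum : \sum_i P i = 1%:M)
    (A_dec : A = \sum_i a i *: P i) :
  bigO2 (fun B => expm (A + B)) (fun B => expm (dcl a P B) *m expm A) /\
  bigO2 (fun B => expm (A + B)) (fun B => expm A *m expm (dcr a P B)) /\
  ((forall j k, j != k -> cexp (a j - a k) != 1) ->
    bigO2 (fun B => expm B *m expm A) (fun B => expm (A + cml a P B)) /\
    bigO2 (fun B => expm A *m expm B) (fun B => expm (A + cmr a P B))).
Proof.
split; [|split].
- by apply: l1bigO2_bigO2; apply: expm_decomposition_left A_dec.
- by apply: l1bigO2_bigO2; apply: expm_decomposition_right A_dec.
- move=> hexp; have hell := ell_neq0 a_inj hexp.
  split; apply: l1bigO2_bigO2.
  + exact: expm_composition_left A_dec hell.
  + exact: expm_composition_right A_dec hell.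
Qed.
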